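(* Let $\mathcal{R},\mathcal{V},\mathcal{R}',\mathcal{V}'$ be finite sets with $|\mathcal{R}|=|\mathcal{R}'|$. For any real number $t\ge1$, any positive number $k\le t$, any deterministic privacy mechanism $\Delta=(\mathcal{R},\mathcal{V},\mathcal{R}',\mathcal{V}',\Pi,\Delta)$ and any released table $\tau'$ on $(\mathcal{R}',\mathcal{V}')$: if $(\Delta,\tau')$ is $Pt$-anonymous, then $\tau'$ is $k$-anonymous.
   Context: A table on $(\mathcal{R},\mathcal{V})$ is a map $\mathcal{R}\to\mathcal{V}$; $\mathcal{T}$, $\mathcal{T}'$ denote the sets of tables on $(\mathcal{R},\mathcal{V})$ and $(\mathcal{R}',\mathcal{V}')$. For sets $X,Y$, $X\to Y$ is the set of maps $X\to Y$. A privacy mechanism is $(\mathcal{R},\mathcal{V},\mathcal{R}',\mathcal{V}',\Pi,\Delta)$ with $\Pi$ uniformly distributed over bijections $\mathcal{R}\to\mathcal{R}'$ and $\Delta$ a random variable in $\mathcal{T}\to(\mathcal{R}\to\mathcal{V}')$; it is a privacy mechanism from $T$ to $T'$ (random variables on $\mathcal{T},\mathcal{T}'$) if $T,\Pi,\Delta$ are mutually independent and $\Delta(T)=T'\circ\Pi$. It is deterministic if for each $\tau\in\mathcal{T}$ there is a unique table $\hat\tau$ with $\Delta(\tau)=\hat\tau$ (with probability one). $\tau'$ is $k$-anonymous if for every $r'\in\mathcal{R}'$ there are at least $k$ elements $\hat r'\in\mathcal{R}'$ with $\tau'(\hat r')=\tau'(r')$. $(\Delta,\tau')$ is $Pt$-anonymous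 (real $t\ge1$) if for all random variables $T,T'$ such that $\Delta$ is a privacy mechanism from $T$ to $T'$ and all $r\in\mathcal{R}$, $r'\in\mathcal{R}'$, $\Pr[\Pi(r)=r'\mid T'=\tau']\le1/t$. *)

From HB Require Import structures.
From mathcomp Require Import all_boot all_order all_algebra.
From mathcomp Require Import all_classical all_reals all_analysis.
Set Implicit Arguments. Unset Strict Implicit. Unset Printing Implicit Defensive.
Import Order.TTheory GRing.Theory Num.Theory.
Local Open Scope classical_set_scope.
Local Open Scope ring_scope.

(* A table on (Rw, V) is a map Rw -> V, i.e. an element of {ffun Rw -> V}. *)

Section PrivacyDefs.
Context {R : realType} {d : measure_display} {Omega : measurableType d}.
Variable P : probability Omega R.

Definition bijections (Rw Rw' : finType) : {set {ffun Rw -> Rw'}} :=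
  [set f : {ffun Rw -> Rw'} | injectiveb f && [forall y, exists x, f x == y]].

(* a random variable with values in a finite set (discrete sigma-algebra) *)
Definition is_rv (X : finType) (f : Omega -> X) : Prop :=
  forall x : X, measurable (f @^-1` [set x]).

Definition Pr (A : set Omega) : R := fine (P A).
Definition condPr (A B : set Omega) : R := Pr (A `&` B) / Pr B.

Definition indep3 (X Y Z : finType) (f : Omega -> X) (g : Omega -> Y)
    (h : Omega -> Z) : Prop :=
  forall (A : {set X}) (B : {set Y}) (C : {set Z}),
    P ([set w | f w \in A] `&` [set w | g w \in B] `&` [set w | h w \in C]) =
    (P [set w | f w \in A] * P [set w | g w \in B] * P [set w | h w \in C])%E.

Definition privacy_mechanism (Rw V Rw' V' : finType)
    (Pi : Omega -> {ffun Rw -> Rw'})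
    (Delta : Omega -> {ffun {ffun Rw -> V} -> {ffun Rw -> V'}}) : Prop :=
  [/\ is_rv Pi,
      (forall pi : {ffun Rw -> Rw'},
        P (Pi @^-1` [set pi]) =
        (if pi \in bijections Rw Rw' then (#|bijections Rw Rw'|%:R)^-1 else 0)%:E)
    & is_rv Delta].

Definition mechanism_from (Rw V Rw' V' : finType)
    (Pi : Omega -> {ffun Rw -> Rw'})
    (Delta : Omega -> {ffun {ffun Rw -> V} -> {ffun Rw -> V'}})
    (T : Omega -> {ffun Rw -> V}) (T' : Omega -> {ffun Rw' -> V'}) : Prop :=
  [/\ is_rv T, is_rv T', indep3 T Pi Delta
    & P [set w | forall r : Rw, Delta w (T w) r = T' w (Pi w r)] = 1%E].

Definition deterministic (Rw V V' : finType)
    (Delta : Omega -> {ffun {ffun Rw -> V} -> {ffun Rw -> V'}}) : Prop :=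
  forall tau : {ffun Rw -> V}, exists! th : {ffun Rw -> V'},
    P [set w | Delta w tau = th] = 1%E.

Definition released (Rw V Rw' V' : finType)
    (Pi : Omega -> {ffun Rw -> Rw'})
    (Delta : Omega -> {ffun {ffun Rw -> V} -> {ffun Rw -> V'}})
    (tau' : {ffun Rw' -> V'}) : Prop :=
  exists (T : Omega -> {ffun Rw -> V}) (T' : Omega -> {ffun Rw' -> V'}),
    mechanism_from Pi Delta T T' /\ 0 < Pr [set w | T' w = tau'].

(* (Delta, tau') is Pt-anonymous; the conditional probability is required
   to be <= 1/t whenever it is defined (conditioning event of positive prob.) *)
Definition Pt_anonymous (Rw V Rw' V' : finType)
    (Pi : Omega -> {ffun Rw -> Rw'})
    (Delta : Omega -> {ffun {ffun Rw -> V} -> {ffun Rw -> V'}})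
    (tau' : {ffun Rw' -> V'}) (t : R) : Prop :=
  forall (T : Omega -> {ffun Rw -> V}) (T' : Omega -> {ffun Rw' -> V'}),
    mechanism_from Pi Delta T T' ->
    forall (r : Rw) (r' : Rw'),
      0 < Pr [set w | T' w = tau'] ->
      condPr [set w | Pi w r = r'] [set w | T' w = tau'] <= t^-1.

End PrivacyDefs.

Definition k_anonymous {R : realType} (Rw' V' : finType)
    (tau' : {ffun Rw' -> V'}) (k : R) : Prop :=
  forall r' : Rw', k <= (#|[pred r2 | tau' r2 == tau' r']|)%:R.

(* Since Delta is deterministic and tau' is released, some input tau and some
   bijection pi0 satisfy hatD tau = tau' \o pi0, where hatD is the almost sure
   value of Delta.  Feed the mechanism the constant input tau: the release tau'
   then occurs exactly when Pi is a bijection pi with hatD tau = tau' \o pi.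
   Composing such a pi with the transposition of two records of tau' carrying
   the same value yields another one, so for r with pi0 r = r', given the
   release, Pi r is uniform over the c records r2 with tau' r2 = tau' r'.
   Hence Pr[Pi r = r' | T' = tau'] = 1/c, and Pt-anonymity forces t <= c. *)

From HB Require Import structures.
From mathcomp Require Import all_boot all_order all_algebra fingroup perm.
From mathcomp Require Import all_classical all_reals all_analysis.
Set Implicit Arguments. Unset Strict Implicit. Unset Printing Implicit Defensive.
Import Order.TTheory GRing.Theory Num.Theory.

Section MatchingBijections.
Variables (Rw Rw' V' : finType) (th : {ffun Rw -> V'}) (tau' : {ffun Rw' -> V'}).

Definition matching_bijections : {set {ffun Rw -> Rw'}} :=
  [set pi in bijections Rw Rw' | [forall x, th x == tau' (pi x)]].

Lemma matching_bijectionsP (pi : {ffun Rw -> Rw'}) :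
  reflect (pi \in bijections Rw Rw' /\ forall x, th x = tau' (pi x))
          (pi \in matching_bijections).
Proof.
apply: (iffP setIdP) => -[bij_pi th_pi]; split => //.
  by move=> x; apply/eqP/(forallP th_pi).
by apply/forallP => x; rewrite th_pi.
Qed.

Lemma bijections_comp_perm (s : {perm Rw'}) (pi : {ffun Rw -> Rw'}) :
  pi \in bijections Rw Rw' -> [ffun x => s (pi x)] \in bijections Rw Rw'.
Proof.
rewrite !inE => /andP[/injectiveP inj_pi /forallP sur_pi]; apply/andP; split.
  by apply/injectiveP => x y; rewrite !ffunE => /perm_inj /inj_pi.
apply/forallP => y; have /existsP[x /eqP pix] := sur_pi ((s^-1)%g y).
by apply/existsP; exists x; rewrite ffunE pix permKV.
Qed.

Lemma card_matching_at_le (r : Rw) (a b : Rw') : tau' a = tau' b ->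
  #|[set pi in matching_bijections | pi r == a]|
    <= #|[set pi in matching_bijections | pi r == b]|.
Proof.
move=> tau'_ab; pose s := tperm a b.
have tau'_s z : tau' (s z) = tau' z by rewrite /s; case: tpermP => [->|->|].
have inj_s : injective (fun pi : {ffun Rw -> Rw'} => [ffun x => s (pi x)]).
  move=> p1 p2 /ffunP eq_p; apply/ffunP => x.
  by move: (eq_p x); rewrite !ffunE => /perm_inj.
rewrite -(card_imset _ inj_s).
apply/subset_leq_card/fintype.subsetP => _ /imsetP[pi + ->].
move=> /setIdP[/matching_bijectionsP[bij_pi th_pi] /eqP pi_r].
apply/setIdP; split; last by rewrite ffunE pi_r tpermL.
apply/matching_bijectionsP; split; first exact: bijections_comp_perm.
by move=> x; rewrite ffunE tau'_s.
Qed.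

Lemma card_matching_at_eq (r : Rw) (a b : Rw') : tau' a = tau' b ->
  #|[set pi in matching_bijections | pi r == a]|
    = #|[set pi in matching_bijections | pi r == b]|.
Proof. by move=> tau'_ab; apply/eqP; rewrite eqn_leq !card_matching_at_le. Qed.

Lemma card_matching_bijections (r : Rw) (r' : Rw') : th r = tau' r' ->
  #|matching_bijections| = #|[pred r2 | tau' r2 == tau' r']|
                           * #|[set pi in matching_bijections | pi r == r']|.
Proof.
move=> th_r; rewrite -sum1_card.
rewrite (eq_bigr (fun pi : {ffun Rw -> Rw'} =>
  \sum_(r2 | tau' r2 == tau' r') (pi r == r2 : nat))); last first.
  move=> pi /matching_bijectionsP[_ th_pi].
  rewrite (bigD1 (pi r)) /=; last by rewrite -th_pi th_r.
  by rewrite eqxx big1 // => r2 /andP[_ /negbTE]; rewrite eq_sym => ->.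
rewrite exchange_big /= -sum_nat_const; apply: eq_bigr => r2 /eqP tau'_r2.
rewrite -(card_matching_at_eq r tau'_r2) -sum1_card big_mkcond [RHS]big_mkcond.
by apply: eq_bigr => pi _; rewrite inE; case: (_ \in _); case: (_ == _).
Qed.

End MatchingBijections.

Local Open Scope classical_set_scope.
Local Open Scope ring_scope.

Section DiscreteRandomVariables.
Context d (Om : measurableType d) (X : finType) (f : Om -> X).
Hypothesis rv_f : is_rv f.

Lemma preimage_bigcup_fibers (A : set X) :
  f @^-1` A = \bigcup_(x in A) f @^-1` [set x].
Proof. by apply/seteqP; split=> w /=; [exists (f w) | case=> x Ax ->]. Qed.

Lemma is_rv_preimage (A : set X) : measurable (f @^-1` A).
Proof.
by rewrite preimage_bigcup_fibers; apply: fin_bigcup_measurable.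
Qed.

Lemma is_rv_comp (Y : finType) (h : X -> Y) : is_rv (h \o f).
Proof. by move=> y; apply: (is_rv_preimage (h @^-1` [set y])). Qed.

Lemma measurable_rv_pred (S : pred X) : measurable [set w | S (f w)].
Proof. exact: (is_rv_preimage [set x | S x]). Qed.

Lemma probability_rv_pred (R : realType) (P : probability Om R) (S : pred X) :
  P [set w | S (f w)] = (\sum_(x | S x) P (f @^-1` [set x]))%E.
Proof.
change [set w | S (f w)] with (f @^-1` [set x | S x]).
rewrite preimage_bigcup_fibers measure_fin_bigcup //.
- rewrite (fsbigE [seq x <- enum X | S x]).
  + rewrite big_filter_cond big_enum_cond; apply: eq_bigl => x.
    by rewrite mem_setE /= andbb.
  + by rewrite filter_uniq ?enum_uniq.
  + by move=> x /=; rewrite mem_filter => /andP[].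
  + by move=> x /= Sx; rewrite mem_filter Sx mem_enum.
- exact: finite_finset.
- by move=> x y _ _ [w [/= -> <-]].
Qed.

End DiscreteRandomVariables.

Lemma is_rv_pair d (Om : measurableType d) (X Y : finType) (f : Om -> X)
  (g : Om -> Y) : is_rv f -> is_rv g -> is_rv (fun w => (f w, g w)).
Proof.
move=> rv_f rv_g [x y]; have -> : (fun w => (f w, g w)) @^-1` [set (x, y)] =
    f @^-1` [set x] `&` g @^-1` [set y].
  by apply/seteqP; split=> w /=; [case=> -> -> | case=> -> ->].
exact: measurableI.
Qed.

Section AlmostSureEvents.
Context (R : realType) d (Om : measurableType d) (P : probability Om R).
Local Open Scope ereal_scope.

Lemma sub_probability_eq1 (E F : set Om) : measurable E -> measurable F ->
  F `<=` E -> P F = 1 -> P E = 1.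
Proof.
move=> mE mF FE PF; apply/eqP; rewrite eq_le probability_le1 //= -PF.
by rewrite le_measure ?inE.
Qed.

Lemma probability_setI_eq1 (A E : set Om) : measurable A -> measurable E ->
  P E = 1 -> P (A `&` E) = P A.
Proof.
move=> mA mE PE; rewrite [RHS](measureDI P mA mE).
rewrite [X in _ = X + _](_ : _ = 0) ?add0e //.
apply/eqP; rewrite eq_le measure_ge0 andbT.
have <- : P (~` E) = 0 by rewrite probability_setC // PE subee.
by rewrite le_measure ?inE //; [exact: measurableD | exact: measurableC].
Qed.

Lemma probability_eq_setI_eq1 (A B G : set Om) :
  measurable A -> measurable B -> measurable G -> P G = 1 ->
  A `&` G = B `&` G -> P A = P B.
Proof.
move=> mA mB mG PG AGBG.
by rewrite -(probability_setI_eq1 mA mG PG) AGBG probability_setI_eq1.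
Qed.

Lemma probability_bigcap_eq1 (I : finType) (E : I -> set Om) :
  (forall i, measurable (E i)) -> (forall i, P (E i) = 1) ->
  P (\bigcap_i E i) = 1.
Proof.
move=> mE PE.
have mcap : measurable (\bigcap_i E i).
  by apply: fin_bigcap_measurable => //; exact: finite_finset.
have PCcap : P (~` \bigcap_i E i) = 0.
  apply/eqP; rewrite eq_le measure_ge0 andbT setC_bigcap.
  rewrite (le_trans (content_sub_fsum P _ _ _ (@subset_refl _ _))) //.
  - exact: finite_finset.
  - by move=> i _; exact: measurableC.
  - apply: fin_bigcup_measurable => [|i _]; first exact: finite_finset.
    exact: measurableC.
  - rewrite fsbig1 // => i _.
    by apply: etrans (probability_setC P (mE i)) _; rewrite PE subee.
by rewrite -[X in P X]setCK probability_setC ?PCcap ?sube0 //; exact: measurableC.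
Qed.

Section DiscreteLaw.
Context (X : finType) (f : Om -> X).
Hypothesis rv_f : is_rv f.

Lemma probability_rv_support (S : pred X) :
  (forall x, ~~ S x -> P (f @^-1` [set x]) = 0) -> P [set w | S (f w)] = 1.
Proof.
move=> PS; rewrite -(probability_setT P) (_ : setT = [set w | predT (f w)]);
  last by apply/seteqP.
rewrite !(probability_rv_pred rv_f).
rewrite [RHS](bigID S) /= [X in _ + X]big1 ?adde0 // => x /PS.
Qed.

Lemma probability_uniform_rv (U : {set X}) :
  (forall x, P (f @^-1` [set x]) = (if x \in U then #|U|%:R^-1 else 0)%:E) ->
  forall A : {set X}, A \subset U ->
  P [set w | f w \in A] = (#|A|%:R / #|U|%:R)%:E.
Proof.
move=> Pf A AU; rewrite (probability_rv_pred rv_f P (mem A)).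
rewrite (eq_bigr (fun=> (#|U|%:R^-1)%:E)) => [|x Ax];
  last by rewrite Pf (fintype.subsetP AU).
by rewrite sumEFin sumr_const mulr_natl.
Qed.

End DiscreteLaw.
End AlmostSureEvents.

(* This is th \o pi^-1 when pi is a bijection, i.e. the table T' of the
   identity Delta(T) = T' \o Pi. *)
Definition relabel_table (Rw Rw' V' : finType) (pi : {ffun Rw -> Rw'})
    (th : {ffun Rw -> V'}) (dflt : {ffun Rw' -> V'}) : {ffun Rw' -> V'} :=
  [ffun y => if [pick x | pi x == y] is Some x then th x else dflt y].

Section RelabelTable.
Variables (Rw Rw' V' : finType) (pi : {ffun Rw -> Rw'}) (th : {ffun Rw -> V'}).
Variable dflt : {ffun Rw' -> V'}.

Lemma relabel_tableE :
  injective pi -> forall x, relabel_table pi th dflt (pi x) = th x.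
Proof.
move=> inj_pi x; rewrite ffunE.
by case: pickP => [x0 /eqP/inj_pi -> // | /(_ x)]; rewrite eqxx.
Qed.

Lemma relabel_table_eqP (tau' : {ffun Rw' -> V'}) : pi \in bijections Rw Rw' ->
  relabel_table pi th dflt = tau' <-> pi \in matching_bijections th tau'.
Proof.
move=> bij_pi; have /setIdP[/injectiveP inj_pi /forallP sur_pi] := bij_pi.
split=> [<- | /matching_bijectionsP[_ th_pi]].
  by apply/matching_bijectionsP; split=> // x; rewrite relabel_tableE.
apply/ffunP => y; have /existsP[x /eqP <-] := sur_pi y.
by rewrite relabel_tableE.
Qed.

End RelabelTable.

Lemma indep3_cst (R : realType) d (Om : measurableType d) (P : probability Om R)
    (X Y Z : finType) (f : Om -> X) (g : Om -> Y) (h : Om -> Z) (c : X) :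
  indep3 P f g h -> indep3 P (fun=> c) g h.
Proof.
move=> indep_fgh A B C /=; case: (c \in A).
  rewrite (_ : [set _ : Om | true] = [set w | f w \in finset.setT]).
    exact: indep_fgh.
  by apply/seteqP; split=> w; rewrite /= finset.in_setT.
rewrite (_ : [set _ : Om | false] = set0); last by apply/seteqP; split.
by rewrite !set0I measure0 !mul0e.
Qed.

Section PrivacyMechanism.
Context (R : realType) d (Om : measurableType d) (P : probability Om R).
Variables (Rw V Rw' V' : finType) (Pi : Om -> {ffun Rw -> Rw'}).
Variable Delta : Om -> {ffun {ffun Rw -> V} -> {ffun Rw -> V'}}.
Hypothesis mech : privacy_mechanism P Pi Delta.

Let rv_Pi : is_rv Pi. Proof. by case: mech. Qed.
Let rv_Delta : is_rv Delta. Proof. by case: mech. Qed.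

Let mbij : measurable [set w | Pi w \in bijections Rw Rw'].
Proof. exact: (measurable_rv_pred rv_Pi (mem (bijections Rw Rw'))). Qed.

Lemma privacy_mechanism_bijective :
  P [set w | Pi w \in bijections Rw Rw'] = 1%E.
Proof.
case: mech => _ Pi_unif _; apply: probability_rv_support => // pi pi_nb.
by rewrite Pi_unif ifN.
Qed.

Lemma card_bijections_gt0 : (0 < #|bijections Rw Rw'|)%N.
Proof.
rewrite card_gt0; apply/negP => /eqP no_bij.
move: privacy_mechanism_bijective; rewrite no_bij.
have -> : [set w | Pi w \in finset.set0] = set0.
  by apply/seteqP; split=> // w; rewrite /= finset.in_set0.
by rewrite measure0 => -[] /eqP; rewrite eq_sym oner_eq0.
Qed.

Lemma probability_Pi_in (S : {set {ffun Rw -> Rw'}}) :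
  S \subset bijections Rw Rw' ->
  P [set w | Pi w \in S] = (#|S|%:R / #|bijections Rw Rw'|%:R)%:E.
Proof. by case: mech => _ Pi_unif _; apply: probability_uniform_rv. Qed.

Lemma deterministic_almost_sure : deterministic P Delta ->
  exists hatD, P (Delta @^-1` [set hatD]) = 1%E.
Proof.
move=> det; have [hat Phat] := boolp.choice (fun tau =>
  let: ex_intro th (conj Pth _) := det tau in ex_intro _ th Pth).
exists [ffun tau => hat tau].
have -> : Delta @^-1` [set [ffun tau => hat tau]] =
    \bigcap_tau [set w | Delta w tau = hat tau].
  apply/seteqP; split=> w /=; first by move=> /= Delta_w tau _ /=; rewrite Delta_w ffunE.
  by move=> Delta_w; apply/ffunP => tau; rewrite ffunE Delta_w.
apply: probability_bigcap_eq1 => // tau.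
exact: (is_rv_comp rv_Delta (fun D => D tau)).
Qed.

Lemma almost_sure_Delta_at (hatD : {ffun {ffun Rw -> V} -> {ffun Rw -> V'}}) :
  P (Delta @^-1` [set hatD]) = 1%E ->
  forall tau, P [set w | Delta w tau = hatD tau] = 1%E.
Proof.
move=> P_hatD tau; apply: sub_probability_eq1 P_hatD => //; last by move=> w /= ->.
exact: (is_rv_comp rv_Delta (fun D => D tau)).
Qed.

Lemma released_matching (hatD : {ffun {ffun Rw -> V} -> {ffun Rw -> V'}})
    (T0 : Om -> {ffun Rw -> V}) (T0' : Om -> {ffun Rw' -> V'})
    (tau' : {ffun Rw' -> V'}) :
  P (Delta @^-1` [set hatD]) = 1%E -> mechanism_from P Pi Delta T0 T0' ->
  0 < Pr P [set w | T0' w = tau'] ->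
  exists tau pi, pi \in matching_bijections (hatD tau) tau'.
Proof.
move=> P_hatD [rv_T0 rv_T0' _ P_eq] P_tau'.
pose Eeq := [set w | forall x, Delta w (T0 w) x = T0' w (Pi w x)].
pose Egood := [set w | Pi w \in bijections Rw Rw'] `&` Delta @^-1` [set hatD] `&` Eeq.
have mEeq : measurable Eeq.
  have rv_all := is_rv_pair rv_T0 (is_rv_pair rv_Pi (is_rv_pair rv_Delta rv_T0')).
  rewrite (_ : Eeq = [set w | [forall x, Delta w (T0 w) x == T0' w (Pi w x)]]).
    exact: (measurable_rv_pred rv_all
      (fun p => [forall x, p.2.2.1 p.1 x == p.2.2.2 (p.2.1 x)])).
  apply/seteqP; split=> w /= Eeq_w; first by apply/forallP => x; apply/eqP/Eeq_w.
  by move=> x; apply/eqP/(forallP Eeq_w).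
have P_good : P Egood = 1%E.
  rewrite probability_setI_eq1 //; last exact: measurableI.
  by rewrite probability_setI_eq1 // privacy_mechanism_bijective.
have [w [T0'_w [[bij_w /= Delta_w] Eeq_w]]] : exists w, ([set w | T0' w = tau'] `&` Egood) w.
  apply: contrapT => /forallNP none; move: P_tau'.
  rewrite /Pr -(probability_setI_eq1 (rv_T0' tau') _ P_good).
    by rewrite (_ : _ `&` _ = set0) ?measure0 ?ltxx //; apply/seteqP; split=> w //= /none.
  by apply: measurableI => //; exact: measurableI.
exists (T0 w), (Pi w); apply/matching_bijectionsP; split=> // x.
by rewrite -Delta_w Eeq_w T0'_w.
Qed.

Section ConstantInput.
Variables (tau : {ffun Rw -> V}) (th : {ffun Rw -> V'}) (tau' : {ffun Rw' -> V'}).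
Hypothesis Delta_tau : P [set w | Delta w tau = th] = 1%E.

Let T' w := relabel_table (Pi w) (Delta w tau) tau'.
Let M := matching_bijections th tau'.

Let rv_T' : is_rv T'.
Proof.
exact: (is_rv_comp (is_rv_pair rv_Pi rv_Delta)
  (fun p => relabel_table p.1 (p.2 tau) tau')).
Qed.

Lemma mechanism_from_cst_input (T0 : Om -> {ffun Rw -> V}) (T0' : Om -> {ffun Rw' -> V'}) :
  mechanism_from P Pi Delta T0 T0' -> mechanism_from P Pi Delta (fun=> tau) T'.
Proof.
case=> _ _ indep0 _; split=> //.
- by move=> tau0; exact: (is_rv_comp rv_Pi (fun=> tau)).
- exact: indep3_cst indep0.
apply: sub_probability_eq1 privacy_mechanism_bijective => //.
- rewrite (_ : [set w | _] =
      [set w | [forall x, Delta w tau x == T' w (Pi w x)]]).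
    exact: (measurable_rv_pred (is_rv_pair rv_Pi rv_Delta)
      (fun p => [forall x, p.2 tau x == relabel_table p.1 (p.2 tau) tau' (p.1 x)])).
  apply/seteqP; split=> w /= eq_w; first by apply/forallP => x; apply/eqP/eq_w.
  by move=> x; apply/eqP/(forallP eq_w).
- move=> w /setIdP[/injectiveP inj_w _] x.
  by rewrite /T' relabel_tableE.
Qed.

Lemma Pr_relabel_event (B : set Om) (S : {set {ffun Rw -> Rw'}}) :
  measurable B -> S \subset M ->
  (forall w, Pi w \in bijections Rw Rw' -> Delta w tau = th ->
    B w <-> Pi w \in S) ->
  Pr P B = #|S|%:R / #|bijections Rw Rw'|%:R.
Proof.
move=> mB SM B_S.
have S_bij : S \subset bijections Rw Rw'.
  by apply/fintype.subsetP => pi /(fintype.subsetP SM)/setIdP[].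
transitivity (fine (P [set w | Pi w \in S])); last by rewrite probability_Pi_in.
congr fine; apply: (probability_eq_setI_eq1 mB _ _ _ _).
- exact: (measurable_rv_pred rv_Pi (mem S)).
- apply: measurableI mbij _.
  exact: (is_rv_comp rv_Delta (fun D => D tau)).
- by rewrite probability_setI_eq1 ?privacy_mechanism_bijective //;
    exact: (is_rv_comp rv_Delta (fun D => D tau)).
- by apply/seteqP; split=> w [B_w [bij_w Delta_w]]; split=> //; apply/(B_S w).
Qed.

Lemma Pr_relabel_eq :
  Pr P [set w | T' w = tau'] = #|M|%:R / #|bijections Rw Rw'|%:R.
Proof.
apply: Pr_relabel_event => //; first exact: rv_T'.
by move=> w bij_w Delta_w; rewrite /= /T' Delta_w relabel_table_eqP.
Qed.

Lemma condPr_relabel (r : Rw) (r' : Rw') :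
  condPr P [set w | Pi w r = r'] [set w | T' w = tau'] =
  #|[set pi in M | pi r == r']|%:R / #|M|%:R.
Proof.
have nb_neq0 : #|bijections Rw Rw'|%:R != 0 :> R.
  by rewrite pnatr_eq0 -lt0n card_bijections_gt0.
rewrite /condPr (@Pr_relabel_event _ [set pi in M | pi r == r']).
- by rewrite Pr_relabel_eq invf_div mulrA divfK.
- apply: measurableI; last exact: rv_T'.
  exact: (is_rv_comp rv_Pi (fun pi => pi r)).
- by apply/fintype.subsetP => pi /setIdP[].
- move=> w bij_w Delta_w; rewrite /= /T' Delta_w relabel_table_eqP //.
  split=> [[Pi_r M_w] | /setIdP[M_w /eqP Pi_r]] //.
  by apply/setIdP; split; last apply/eqP.
Qed.

End ConstantInput.
End PrivacyMechanism.

Theorem lemma2 (R : realType) (d : measure_display) (Omega : measurableType d)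
  (P : probability Omega R) (Rw V Rw' V' : finType)
  (Pi : Omega -> {ffun Rw -> Rw'})
  (Delta : Omega -> {ffun {ffun Rw -> V} -> {ffun Rw -> V'}})
  (tau' : {ffun Rw' -> V'}) (t k : R) :
  #|Rw| = #|Rw'| -> 1 <= t -> 0 < k -> k <= t ->
  privacy_mechanism P Pi Delta -> deterministic P Delta ->
  released P Pi Delta tau' ->
  Pt_anonymous P Pi Delta tau' t ->
  k_anonymous tau' k.
Proof.
move=> _ t_ge1 _ k_le_t mech det [T0 [T0' [mech0 P_tau']]] anon r'.
have [hatD P_hatD] := deterministic_almost_sure mech det.
have [tau [pi0 M_pi0]] := released_matching mech P_hatD mech0 P_tau'.
have /matching_bijectionsP[/setIdP[_ sur_pi0] th_pi0] := M_pi0.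
have /forallP/(_ r')/existsP[r /eqP pi0_r] := sur_pi0.
have Delta_tau := almost_sure_Delta_at mech P_hatD tau.
have th_r : hatD tau r = tau' r' by rewrite th_pi0 pi0_r.
have card_M := card_matching_bijections th_r.
have M_gt0 : (0 < #|matching_bijections (hatD tau) tau'|)%N.
  by apply/card_gt0P; exists pi0.
move: (M_gt0); rewrite card_M muln_gt0 => /andP[c_gt0 m_gt0].
have := anon _ _ (mechanism_from_cst_input mech tau tau' mech0) r r'.
rewrite (Pr_relabel_eq mech tau' Delta_tau) divr_gt0 ?ltr0n //;
  last exact: card_bijections_gt0 mech.
rewrite (condPr_relabel mech tau' Delta_tau) card_M natrM invfM mulrCA.
rewrite divff ?mulr1 ?pnatr_eq0 -?lt0n // => /(_ isT).
rewrite lef_pV2 ?posrE ?ltr0n ?(lt_le_trans ltr01 t_ge1) // => t_le_c.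
exact: le_trans k_le_t t_le_c.
Qed.
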